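(* Let $n\ge3$ and $j\ge0$. Then $\mathcal{N}_j\subseteq N_{\mathcal{B}}(\mathbb{Z}\mathcal{N}_{j-1})$, where $N_{\mathcal{B}}(\mathbb{Z}\mathcal{N}_{j-1})=\{b\in\mathcal{B}: [b,m]\in\mathbb{Z}\mathcal{N}_{j-1}\text{ for all } m\in\mathbb{Z}\mathcal{N}_{j-1}\}$ and $\mathbb{Z}\mathcal{N}_{j-1}$ is the $\mathbb{Z}$-span of $\mathcal{N}_{j-1}$ in $\mathfrak{L}(n)$.
   Context: Fix an integer $n\ge 3$. A partition is a sequence $\Lambda=(\lambda_j)_{j\ge1}$ of non-negative integers with finite support; $\mathrm{wt}(\Lambda)=\sum_j j\lambda_j$; $\mathrm{Part}(k)$ is the set of partitions with $\lambda_j=0$ for $j>k$. Write $x^\Lambda=\prod_j x_j^{\lambda_j}$, $\deg(x^\Lambda)=\sum_j\lambda_j$, and let $\partial_k$ be the partial derivative with respect to $x_k$. $\mathfrak{L}(n)$ is the free $\mathbb{Z}$-module with basis $\mathcal{B}=\{x^\Lambda\partial_k : 1\le k\le n,\ \Lambda\in\mathrm{Part}(k-1)\}$, a Lie ring with bracket defined on basis elements by $[x^\Lambda\partial_k,x^\Theta\partial_j]=\partial_j(x^\Lambda)x^\Theta\partial_k$ if $j<k$, $-x^\Lambda\partial_k(x^\Theta)\partial_j$ if $j>k$, $0$ if $j=k$, extended bilinearly. For an integer $i\ge-1$, let $r_i\in\{1,\dots,n-1\}$ with $i\equiv r_i\pmod{n-1}$ and $h_i=\lfloor (i-1)/(n-1)\rfloor+1$.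 Define $\mathrm{WD}(x^\Lambda\partial_k)=\mathrm{wt}(\Lambda)-\deg(x^\Lambda)+n-k$ and $\mathrm{lev}_i(x^\Lambda\partial_k)=h_i\,\mathrm{WD}(x^\Lambda\partial_k)+\deg(x^\Lambda)-1$. For $i\ge-1$, $\mathcal{N}_i=\{b\in\mathcal{B}: \mathrm{lev}_j(b)\le j\text{ for some integer } -1\le j\le i\}$. *)

From mathcomp Require Import all_boot all_order all_algebra.
Set Implicit Arguments. Unset Strict Implicit. Unset Printing Implicit Defensive.
Import Order.TTheory GRing.Theory Num.Theory.
Local Open Scope ring_scope.

(* A (raw) basis symbol x^Lambda d_k is a pair (k, lam) where
   lam = [:: lambda_1; ...; lambda_{k-1}] (so Lambda \in Part(k-1)). *)
Definition bas := (nat * seq nat)%type.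

(* b is in the basis B of L(n): 1 <= k <= n and Lambda in Part(k-1),
   represented canonically by a list of length exactly k-1. *)
Definition is_basis (n : nat) (b : bas) : bool :=
  (0 < b.1 <= n)%N && (size b.2 == b.1.-1).

Definition wt (b : bas) : nat := (\sum_(i < size b.2) i.+1 * nth 0 b.2 i)%N.
Definition deg (b : bas) : nat := sumn b.2.

Definition WD (n : nat) (b : bas) : int :=
  (wt b)%:Z - (deg b)%:Z + n%:Z - (b.1)%:Z.

(* h_i = floor((i-1)/(n-1)) + 1  (divz is floor division for positive divisor) *)
Definition hh (n : nat) (i : int) : int := ((i - 1) %/ (n%:Z - 1))%Z + 1.

Definition lev (n : nat) (i : int) (b : bas) : int :=
  hh n i * WD n b + (deg b)%:Z - 1.

Definition inN (n : nat) (i : int) (b : bas) : Prop :=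
  is_basis n b /\ exists j : int, (-1 <= j) /\ (j <= i) /\ (lev n j b <= j).

(* Elements of the free Z-module L(n): formal Z-linear combinations of basis
   symbols; two formal sums denote the same element iff they have the same
   coefficient function. *)
Definition elt := seq (int * bas).

Definition coeff (m : elt) (b : bas) : int := \sum_(t <- m | t.2 == b) t.1.

(* Bracket of basis elements, as (integer coefficient, basis element):
   [x^L d_k, x^T d_j] =  lambda_j x^(L - e_j + T) d_k   if j < k
                      = -theta_k  x^(L + T - e_k) d_j   if j > k
                      = 0                               if j = k.
   (When the coefficient is 0 the monomial part is irrelevant.) *)
Definition bracket_basis (b1 b2 : bas) : int * bas :=
  let: (k, L) := b1 in let: (j, T) := b2 in
  if (j < k)%N then
    ((nth 0 L j.-1)%:Z,
     (k, mkseq (fun i => nth 0 L i - (i == j.-1) + nth 0 T i)%N k.-1))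
  else if (k < j)%N then
    (- (nth 0 T k.-1)%:Z,
     (j, mkseq (fun i => nth 0 T i - (i == k.-1) + nth 0 L i)%N j.-1))
  else (0, b1).

Definition bracket (m1 m2 : elt) : elt :=
  [seq (let c := bracket_basis t1.2 t2.2 in (t1.1 * t2.1 * c.1, c.2))
  | t1 <- m1, t2 <- m2].

Definition inZspan (S : bas -> Prop) (m : elt) : Prop :=
  exists s : elt, (forall t, t \in s -> S t.2) /\ (forall b, coeff s b = coeff m b).

Definition of_bas (b : bas) : elt := [:: (1, b)].

Definition inNormalizerB (n : nat) (S : bas -> Prop) (b : bas) : Prop :=
  is_basis n b /\ forall m : elt, inZspan S m -> inZspan S (bracket (of_bas b) m).

From mathcomp Require Import all_boot all_order all_algebra zify.
Import Order.TTheory GRing.Theory Num.Theory.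

(* If the bracket [c] of basis elements [b], [b'] is nonzero, then [c] is a
   basis element with WD c = WD b + WD b' - (n-1) and deg c = deg b + deg b' - 1,
   hence lev_i c = lev_i b + lev_i b' - h_i (n-1).  Since i <= h_i (n-1), the
   excess lev_i - h_i (n-1) of a basis element is nonpositive at any level i
   witnessing its membership in some N_j; as WD <= n-1 on every N_j, the excess
   is moreover nonincreasing in i.  For b in N_j and b' in N_(j-1),
   witnessed at levels i1 and i2, this places c in N_(j-1) at level i2 when
   i1 <= i2 and at level i1 - 1 otherwise; in the latter case the boundary
   situations are excluded because WD b = 0 forces b' = d_1.  Bilinearity of
   the bracket then gives the statement about the normalizer. *)

Local Open Scope nat_scope.

Definition wsum (w : nat -> nat) (K : nat) (L : seq nat) : nat :=
  \sum_(i < K) w i * nth 0 L i.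

Lemma wsum_widen {w K L} : size L <= K -> wsum w K L = wsum w (size L) L.
Proof.
move=> hK; rewrite /wsum (big_ord_widen K (fun i => w i * nth 0 L i) hK) [RHS]big_mkcond.
apply: eq_bigr => i _; case: ltnP => // hi.
by rewrite nth_default // muln0.
Qed.

Lemma wt_wsum b : wt b = wsum succn (size b.2) b.2.
Proof. by []. Qed.

Lemma deg_wsum b : deg b = wsum (fun=> 1) (size b.2) b.2.
Proof.
case: b => k L; rewrite /deg /wsum /=.
elim: L => [|x L IH] /=; first by rewrite big_ord0.
by rewrite big_ord_recl /= mul1n IH.
Qed.

Lemma deg_le_wt b : deg b <= wt b.
Proof. by rewrite deg_wsum; apply: leq_sum => i _; rewrite leq_mul2r; lia. Qed.

Lemma wt_le_deg b : wt b <= size b.2 * deg b.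
Proof.
rewrite deg_wsum /wsum big_distrr; apply: leq_sum => i _.
by rewrite mul1n leq_mul2r ltn_ord orbT.
Qed.

Lemma deg_index_le_wt b p : p < size b.2 -> deg b + p * nth 0 b.2 p <= wt b.
Proof.
move=> hp; have -> : wt b = deg b + \sum_(i < size b.2) i * nth 0 b.2 i.
  by rewrite deg_wsum /wt -big_split; apply: eq_bigr => i _; rewrite mulSn mul1n.
by rewrite leq_add2l (bigD1 (Ordinal hp)) //= leq_addr.
Qed.

Lemma wsum_bracket_monomial w {K L T p} :
  size L = K -> size T <= K -> p < K -> 0 < nth 0 L p ->
  wsum w K (mkseq (fun i => nth 0 L i - (i == p) + nth 0 T i) K) + w p
  = wsum w K L + wsum w K T.
Proof.
move=> hL hT hp hpos.
have -> : w p = \sum_(i < K) w i * (val i == p).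
  rewrite (bigD1 (Ordinal hp)) //= eqxx muln1 big1 ?addn0 // => i hi.
  by rewrite (_ : (val i == p) = false) ?muln0 //; apply: contraNF hi => /eqP e; apply/eqP/val_inj.
rewrite /wsum -!big_split /=; apply: eq_bigr => i _; rewrite nth_mkseq //.
by case: eqVneq => [e|_]; rewrite -?e in hpos *; cbn [nat_of_bool]; nia.
Qed.

Local Open Scope ring_scope.

Lemma WD_ge0 {n b} : is_basis n b -> 0 <= WD n b.
Proof.
case/andP=> /andP [_ hkn] _; have := deg_le_wt b.
rewrite /WD; lia.
Qed.

Lemma WD_deg0 {n b} : is_basis n b -> deg b = 0%N -> WD n b <= n%:Z - 1.
Proof.
case/andP=> /andP [hk _] _ d0; have := wt_le_deg b.
rewrite /WD d0; lia.
Qed.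

Lemma WD_deg1 {n b} : is_basis n b -> deg b = 1%N -> WD n b <= n%:Z - 2.
Proof.
case/andP=> /andP [hk _] /eqP hs d1; have := wt_le_deg b.
rewrite /WD d1 hs; lia.
Qed.

Lemma bracket_basis_lt {n k L j T} :
  is_basis n (k, L) -> is_basis n (j, T) -> (j < k)%N -> (0 < nth 0 L j.-1)%N ->
  let c := (bracket_basis (k, L) (j, T)).2 in
  [/\ is_basis n c, WD n c = WD n (k, L) + WD n (j, T) - (n%:Z - 1)
    & (deg c)%:Z = (deg (k, L))%:Z + (deg (j, T))%:Z - 1].
Proof.
rewrite /is_basis /= => /andP [/andP [hk hkn] /eqP hL] /andP [/andP [hj _] /eqP hT] hjk hpos.
rewrite /bracket_basis hjk /=.
set M := mkseq _ k.-1.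
have hM : size M = k.-1 by rewrite size_mkseq.
have hTK : (size T <= k.-1)%N by lia.
have hjK : (j.-1 < k.-1)%N by lia.
have ew := wsum_bracket_monomial succn hL hTK hjK hpos.
have ed := wsum_bracket_monomial (fun=> 1%N) hL hTK hjK hpos.
rewrite -/M !(wsum_widen hTK) in ew ed.
split; first by rewrite /is_basis /= hM eqxx andbT hk hkn.
- rewrite /WD !wt_wsum !deg_wsum /= hM hL; lia.
- rewrite !deg_wsum /= hM hL; lia.
Qed.

Lemma bracket_basis_nz {n b b'} :
  is_basis n b -> is_basis n b' -> (bracket_basis b b').1 != 0 ->
  let c := (bracket_basis b b').2 in
  [/\ is_basis n c, WD n c = WD n b + WD n b' - (n%:Z - 1)
    & (deg c)%:Z = (deg b)%:Z + (deg b')%:Z - 1].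
Proof.
case: b => k L; case: b' => j T bL bT.
case: (ltngtP j k) => hjk; last by rewrite /bracket_basis hjk ltnn eqxx.
- rewrite {1}/bracket_basis hjk /= => nz.
  by apply: bracket_basis_lt; rewrite // lt0n; apply: contraNneq nz => ->.
- rewrite {1}/bracket_basis ltnNge (ltnW hjk) hjk /= oppr_eq0 => nz.
  have hpos : (0 < nth 0 T k.-1)%N by rewrite lt0n; apply: contraNneq nz => ->.
  have [bc eWD edeg] := bracket_basis_lt bT bL hjk hpos.
  have -> : (bracket_basis (k, L) (j, T)).2 = (bracket_basis (j, T) (k, L)).2.
    by rewrite /bracket_basis hjk ltnNge (ltnW hjk).
  by split; rewrite // ?eWD ?edeg; lia.
Qed.

Lemma WD_eq0_bracket {n b b'} :
  is_basis n b -> is_basis n b' -> (bracket_basis b b').1 != 0 ->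
  WD n b = 0 -> deg b' = 0%N /\ WD n b' = n%:Z - 1.
Proof.
case: b => k L; case: b' => j T.
rewrite /is_basis /= => /andP [/andP [hk hkn] /eqP hL] /andP [/andP [hj hjn] /eqP hT].
have := deg_le_wt (k, L); rewrite /WD /bracket_basis /= => hdw.
case: (ltngtP j k) => hjk //= nz hWD; last by lia.
have hidx := deg_index_le_wt (k, L) j.-1 ltac:(rewrite /= hL; lia).
have hpos : (0 < nth 0 L j.-1)%N by rewrite lt0n; apply: contraNneq nz => ->.
have j1 : j = 1%N by move: hidx => /=; nia.
have T0 : T = [::] by apply/size0nil; rewrite hT j1.
by rewrite /deg /wt T0 j1 /= big_ord0; split => //; lia.
Qed.

Lemma lev_bracket {n b b'} i :
  is_basis n b -> is_basis n b' -> (bracket_basis b b').1 != 0 ->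
  lev n i (bracket_basis b b').2 = lev n i b + lev n i b' - hh n i * (n%:Z - 1).
Proof.
move=> bb bb' nz; have [_ eWD edeg] := bracket_basis_nz bb bb' nz.
rewrite /lev eWD edeg; lia.
Qed.

Section Levels.

Variable n : nat.
Hypothesis n_ge3 : (3 <= n)%N.

Lemma hh_ge0 {i} : -1 <= i -> 0 <= hh n i.
Proof.
move=> hi; have : -1 <= ((i - 1) %/ (n%:Z - 1))%Z by rewrite lez_divRL; lia.
rewrite /hh; lia.
Qed.

Lemma le_hh {i i'} : i <= i' -> hh n i <= hh n i'.
Proof. by move=> hi; rewrite /hh lerD2r lez_pdiv2r //; lia. Qed.

Lemma le_hh_mul i : i <= hh n i * (n%:Z - 1).
Proof.
have hN : n%:Z - 1 != 0 by lia.
have := ltz_mod (i - 1) hN; have := divz_eq (i - 1) (n%:Z - 1).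
rewrite /hh gtr0_norm; last by lia.
set q := ((i - 1) %/ _)%Z; set r := ((i - 1) %% _)%Z.
by move=> e hr; rewrite mulrDl mul1r; lia.
Qed.

Lemma WD_le_of_lev {i b} : is_basis n b -> -1 <= i -> lev n i b <= i -> WD n b <= n%:Z - 1.
Proof.
move=> bb hi; have := hh_ge0 hi; have := le_hh_mul i; rewrite /lev.
set h := hh n i; set A := WD n b => hih h0 hlev.
have [d0|[d1|d2]] : deg b = 0%N \/ deg b = 1%N \/ (2 <= deg b)%N by lia.
- exact: WD_deg0.
- by have := WD_deg1 bb d1; lia.
- by rewrite leNgt; apply/negP => hA; have := @mulr_ge0 _ h (A - n%:Z) h0 ltac:(lia); nia.
Qed.

Lemma lev_sub_hh_antimono {i i' b} : WD n b <= n%:Z - 1 -> i <= i' ->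
  lev n i' b - hh n i' * (n%:Z - 1) <= lev n i b - hh n i * (n%:Z - 1).
Proof.
move=> hA ii'; have := le_hh ii'; rewrite /lev => hh_le.
have := @mulr_ge0 _ (hh n i' - hh n i) (n%:Z - 1 - WD n b) ltac:(lia) ltac:(lia).
lia.
Qed.

Section BracketLevels.

Variables (b b' : bas) (i1 i2 : int).
Hypotheses (bb : is_basis n b) (bb' : is_basis n b').
Hypothesis nz : (bracket_basis b b').1 != 0.
Hypotheses (i1_ge : -1 <= i1) (i2_ge : -1 <= i2).
Hypotheses (lev_b : lev n i1 b <= i1) (lev_b' : lev n i2 b' <= i2).

Lemma lev_bracket_le_right : i1 <= i2 -> lev n i2 (bracket_basis b b').2 <= i2.
Proof.
move=> le12; rewrite (lev_bracket i2 bb bb' nz).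
have := lev_sub_hh_antimono (WD_le_of_lev bb i1_ge lev_b) le12.
have := le_hh_mul i1; lia.
Qed.

Lemma lev_bracket_le_pred : i2 < i1 -> lev n (i1 - 1) (bracket_basis b b').2 <= i1 - 1.
Proof.
move=> lt21; rewrite (lev_bracket (i1 - 1) bb bb' nz).
have [A0|Apos] : WD n b = 0 \/ 1 <= WD n b by have := WD_ge0 bb; lia.
  have [d0 BN] := WD_eq0_bracket bb bb' nz A0.
  by move: lev_b; rewrite /lev A0 d0 BN; lia.
have hB := WD_le_of_lev bb' i2_ge lev_b'.
have hB1 : deg b' = 1%N -> WD n b' <= n%:Z - 2 := WD_deg1 bb'.
have hi1 := le_hh_mul i1; have hi2 := le_hh_mul i2.
have h20 := hh_ge0 i2_ge.
have h2h : hh n i2 <= hh n (i1 - 1) by apply: le_hh; lia.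
have hh1 : hh n (i1 - 1) <= hh n i1 by apply: le_hh; lia.
move: Apos lev_b lev_b' hi1 hi2 h20 h2h hh1 hB1; rewrite /lev.
set h := hh n (i1 - 1); set h1 := hh n i1; set h2 := hh n i2.
set A := WD n b; set B := WD n b'.
move=> Apos l1 l2 hi1 hi2 h20 h2h hh1 hB1.
have excess_b' : h * (B - (n%:Z - 1)) <= h2 * (B - (n%:Z - 1)).
  by have := @mulr_ge0 _ (h - h2) (n%:Z - 1 - B) ltac:(lia) ltac:(lia); lia.
have [hlt|heq] : h < h1 \/ h = h1 by lia.
  by have := @mulr_ge0 _ (h1 - h - 1) A ltac:(lia) ltac:(lia); nia.
(* Now lev_(i1-1) b = lev_i1 b, so the excess of b' at i1 - 1 must be negative. *)
rewrite heq in excess_b' *.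
have [e2|lt2] : h2 = h1 \/ h2 < h1 by lia.
  by rewrite e2 in l2; nia.
have [BN|ltB] : B = n%:Z - 1 \/ B < n%:Z - 1 by lia.
  have d0 : deg b' = 0%N by move: l2 hB1; rewrite BN; case: (deg b') => [|[|d]] //=; lia.
  by rewrite BN d0 in l2 *; nia.
by have := @mulr_ge0 _ (h1 - h2 - 1) (n%:Z - 1 - B - 1) ltac:(lia) ltac:(lia); nia.
Qed.

End BracketLevels.

Lemma inN_bracket {j b b'} : inN n j b -> inN n (j - 1) b' ->
  (bracket_basis b b').1 != 0 -> inN n (j - 1) (bracket_basis b b').2.
Proof.
move=> [bb [i1 [i1_ge [i1_le lev_b]]]] [bb' [i2 [i2_ge [i2_le lev_b']]]] nz.
split; first by case: (bracket_basis_nz bb bb' nz).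
have [le12|lt21] := lerP i1 i2.
  by exists i2; do 2!split => //; exact: (lev_bracket_le_right _ _ i1).
exists (i1 - 1); split; first lia.
by split; [lia | exact: (lev_bracket_le_pred _ _ _ i2)].
Qed.

End Levels.

Lemma coeff_cons u (s : elt) x :
  coeff (u :: s) x = (if u.2 == x then u.1 else 0) + coeff s x.
Proof. by rewrite /coeff big_cons; case: ifP; rewrite ?add0r. Qed.

Lemma big_coeff_support (F : bas -> int) (s : elt) (X : seq bas) :
  uniq X -> {subset map snd s <= X} ->
  \sum_(t <- s) t.1 * F t.2 = \sum_(x <- X) coeff s x * F x.
Proof.
move=> uX; elim: s => [|u s IH] sX.
  by rewrite big_nil big1 // => x _; rewrite /coeff big_nil mul0r.
rewrite big_cons IH => [|x xs]; last by apply: sX; rewrite inE xs orbT.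
under [RHS]eq_bigr => x _ do rewrite coeff_cons mulrDl.
rewrite big_split /=; congr (_ + _).
rewrite (bigD1_seq u.2) ?sX ?mem_head //= eqxx big1 ?addr0 // => x.
by rewrite eq_sym => /negPf ->; rewrite mul0r.
Qed.

Lemma eq_big_coeff (F : bas -> int) (s m : elt) : coeff s =1 coeff m ->
  \sum_(t <- s) t.1 * F t.2 = \sum_(t <- m) t.1 * F t.2.
Proof.
move=> eq_sm; set X := undup (map snd (s ++ m)).
have sub_s : {subset map snd s <= X} by move=> x xs; rewrite mem_undup map_cat mem_cat xs.
have sub_m : {subset map snd m <= X} by move=> x xm; rewrite mem_undup map_cat mem_cat xm orbT.
rewrite !(big_coeff_support F _ X (undup_uniq _)) //.
by apply: eq_bigr => x _; rewrite eq_sm.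
Qed.

Lemma coeff_bracket_of_bas b (m : elt) c :
  coeff (bracket (of_bas b) m) c =
  \sum_(t <- m) t.1 * (if (bracket_basis b t.2).2 == c then (bracket_basis b t.2).1 else 0).
Proof.
rewrite /bracket /of_bas /= cats0 /coeff big_map big_mkcond.
by apply: eq_bigr => t _ /=; case: ifP; rewrite ?mul1r ?mulr0.
Qed.

Lemma inZspan_bracket_of_bas (S S' : bas -> Prop) b m :
  (forall x, S x -> (bracket_basis b x).1 != 0 -> S' (bracket_basis b x).2) ->
  inZspan S m -> inZspan S' (bracket (of_bas b) m).
Proof.
move=> SS' [s [Ss eq_sm]].
exists [seq (t.1 * (bracket_basis b t.2).1, (bracket_basis b t.2).2)
         | t <- s & (bracket_basis b t.2).1 != 0]; split.
  by move=> u /mapP [t]; rewrite mem_filter => /andP [nz st] ->; apply: SS' (Ss t st) nz.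
move=> c; pose F y := if (bracket_basis b y).2 == c then (bracket_basis b y).1 else 0.
rewrite coeff_bracket_of_bas -/F -(eq_big_coeff F _ _ eq_sm).
rewrite /coeff big_map big_filter_cond big_mkcond; apply: eq_bigr => t _ /=.
rewrite /F; case: (_ == c); rewrite ?andbT ?andbF ?mulr0 //.
by case: eqVneq => [->|]; rewrite ?mulr0.
Qed.

Theorem corollary3p2 (n : nat) (j : int) :
  (3 <= n)%N -> 0 <= j ->
  forall b : bas, inN n j b -> inNormalizerB n (inN n (j - 1)) b.
Proof.
move=> n_ge3 _ b bN; split; first by case: bN.
by move=> m; apply: inZspan_bracket_of_bas => b' b'N; apply: inN_bracket.
Qed.
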